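(* For every $n\ge 1$, the sensitivity to synchronism of elementary cellular automaton rule $200$ satisfies $\mu(f_{200,n})=\dfrac{1}{3^n-2^{n+1}+2}$.
   Context: Cells are indexed by $\mathbb{Z}_n=\{0,\dots,n-1\}$, indices modulo $n$. Rule $200$ has local rule $r_{200}(x_1,x_2,x_3)=x_2\wedge(x_1\vee x_3)$, and global function $f_{200,n}(x)_i=r_{200}(x_{i-1},x_i,x_{i+1})$. An update schedule is an ordered partition $\Delta=(\Delta_1,\dots,\Delta_k)$ of $\mathbb{Z}_n$ into nonempty blocks; $\mathcal{P}_n$ is the set of them. For a block $B$ let $f^{(B)}(x)_i=f_{200,n}(x)_i$ if $i\in B$ and $x_i$ otherwise; $f^{(\Delta)}_{200,n}=f^{(\Delta_k)}\circ\cdots\circ f^{(\Delta_1)}$. The dynamics of $\Delta$ is the transition digraph with arcs $(x,f^{(\Delta)}_{200,n}(x))$; $\mathcal{D}(f_{200,n})$ is the set of distinct dynamics over $\Delta\in\mathcal{P}_n$ (equivalently, the number of distinct maps $f^{(\Delta)}_{200,n}$). The sensitivity to synchronism is $\mu(f_{200,n})=|\mathcal{D}(f_{200,n})|/(3^n-2^{n+1}+2)$. *)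

From mathcomp Require Import all_boot all_order all_algebra.
Set Implicit Arguments. Unset Strict Implicit. Unset Printing Implicit Defensive.

Definition config (n : nat) := {ffun 'I_n -> bool}.

Lemma ord_pos n (i : 'I_n) : 0 < n.
Proof. exact: leq_ltn_trans (leq0n i) (ltn_ord i). Qed.

(* i - 1 and i + 1 modulo n *)
Definition cell_prev n (i : 'I_n) : 'I_n :=
  Ordinal (ltn_pmod (i + n.-1) (ord_pos i)).
Definition cell_next n (i : 'I_n) : 'I_n :=
  Ordinal (ltn_pmod (i.+1) (ord_pos i)).

Definition r200 (x1 x2 x3 : bool) : bool := x2 && (x1 || x3).

Definition f200 n (x : config n) : config n :=
  [ffun i => r200 (x (cell_prev i)) (x i) (x (cell_next i))].

Definition block_update n (B : {set 'I_n}) (x : config n) : config n :=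
  [ffun i => if i \in B then f200 x i else x i].

(* An ordered partition (Delta_1,...,Delta_k) of 'I_n into nonempty blocks is
   encoded by the labelling lab : 'I_n -> 'I_n, lab i = (index of the block
   containing i) - 1; validity = the set of used labels is {0,...,k-1}
   (an initial segment), so that every block is nonempty.
   This is a bijection with ordered partitions. *)
Definition schedule (n : nat) := {ffun 'I_n -> 'I_n}.

Definition is_ordered_partition n (lab : schedule n) : bool :=
  [forall i, forall j : 'I_n, (j < lab i)%N ==> [exists i', lab i' == j]].

Definition block n (lab : schedule n) (j : 'I_n) : {set 'I_n} :=
  [set i | lab i == j].

(* f^(Delta) = f^(Delta_k) o ... o f^(Delta_1); blocks applied in increasing
   label order (labels beyond k-1 give empty blocks, i.e. the identity). *)
Definition f_sched n (lab : schedule n) (x : config n) : config n :=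
  foldl (fun y j => block_update (block lab j) y) x (enum 'I_n).

Definition f_sched_ffun n (lab : schedule n) : {ffun config n -> config n} :=
  [ffun x => f_sched lab x].

Definition dynamics200 n : {set {ffun config n -> config n}} :=
  [set f_sched_ffun lab | lab in [pred l : schedule n | is_ordered_partition l]].

Definition mu200 (n : nat) : rat :=
  (#|dynamics200 n|%:R / ((3 ^ n)%:R - (2 ^ n.+1)%:R + 2))%R.

From mathcomp Require Import all_boot all_order all_algebra.

(* Rule 200 is a kernel operator on configurations ordered pointwise: it is
   monotone, deflationary and idempotent.  Hence f200 y = f200 x whenever
   f200 x <= y <= x, so updating any block of cells of such a y keeps it in
   the interval [f200 x, x] and makes it agree with f200 x on that block.
   Running the blocks of a schedule one after the other therefore ends at
   f200 x: every update schedule yields the parallel dynamics, and there is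
   exactly one dynamics. *)

Lemma cell_nextK n : cancel (@cell_next n) (@cell_prev n).
Proof.
move=> i; have n_gt0 := ord_pos i.
apply: val_inj => /=; rewrite modnDml.
have -> : i.+1 + n.-1 = i + n by rewrite -addn1 -addnA add1n prednK.
by rewrite modnDr modn_small.
Qed.

Lemma cell_prevK n : cancel (@cell_prev n) (@cell_next n).
Proof.
move=> i; have n_gt0 := ord_pos i.
apply: val_inj => /=; rewrite -addn1 modnDml -addnA addn1 prednK //.
by rewrite modnDr modn_small.
Qed.

Section Rule200Kernel.

Variable n : nat.
Implicit Types x y : config n.

Definition config_le x y := forall i, x i ==> y i.

Lemma f200_le x : config_le (f200 x) x.
Proof. by move=> i; rewrite ffunE /r200; apply/implyP => /andP[]. Qed.

Lemma f200_mono x y : config_le x y -> config_le (f200 x) (f200 y).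
Proof.
move=> xy i; rewrite !ffunE /r200.
move: (xy (cell_prev i)) (xy i) (xy (cell_next i)).
by do 3!case: (x _); do 3!case: (y _).
Qed.

Lemma f200_idem x : f200 (f200 x) = f200 x.
Proof.
apply/ffunP => i; rewrite !ffunE /r200 cell_prevK cell_nextK.
by case: (x (cell_prev (cell_prev i))); case: (x (cell_next (cell_next i)));
   case: (x (cell_prev i)); case: (x i); case: (x (cell_next i)).
Qed.

Lemma f200_between {x y} :
  config_le (f200 x) y -> config_le y x -> f200 y = f200 x.
Proof.
move=> fxy yx; apply/ffunP => i; apply/idP/idP.
- exact/implyP/f200_mono.
- by rewrite -{1}f200_idem; apply/implyP/f200_mono.
Qed.

Lemma block_update_between {x y} (B : {set 'I_n}) :
  config_le (f200 x) y -> config_le y x ->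
  block_update B y = [ffun i => if i \in B then f200 x i else y i].
Proof.
by move=> fxy yx; rewrite /block_update (f200_between fxy yx).
Qed.

Lemma foldl_block_update {J : Type} {B : J -> {set 'I_n}} {s : seq J} {x y} :
  config_le (f200 x) y -> config_le y x ->
  foldl (fun z j => block_update (B j) z) y s =
  [ffun i => if has (fun j => i \in B j) s then f200 x i else y i].
Proof.
elim: s y => [|j s IHs] y fxy yx /=.
  by apply/ffunP => i; rewrite ffunE.
rewrite (block_update_between (B j) fxy yx).
set y' := [ffun _ => _].
have fxy' : config_le (f200 x) y'.
  by move=> i; rewrite [y' i]ffunE; case: ifP => // _; apply/implyP.
have y'x : config_le y' x.
  by move=> i; rewrite [y' i]ffunE; case: ifP => // _; apply: f200_le.
rewrite (IHs _ fxy' y'x); apply/ffunP => i; rewrite !ffunE.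
by case: (i \in B j) => /=; case: has.
Qed.

Lemma f_sched_parallel (lab : schedule n) x : f_sched lab x = f200 x.
Proof.
have xx : config_le x x by move=> i; apply/implyP.
rewrite /f_sched (foldl_block_update (f200_le x) xx).
apply/ffunP => i; rewrite ffunE.
have covered : has (fun j => i \in block lab j) (enum 'I_n).
  by apply/hasP; exists (lab i); rewrite ?mem_enum // inE.
by rewrite covered.
Qed.

End Rule200Kernel.

Lemma dynamics200_parallel n : 0 < n -> dynamics200 n = [set [ffun x => f200 x]].
Proof.
move=> n_gt0; apply/setP => g; rewrite inE; apply/imsetP/eqP.
- by move=> [lab _ ->]; apply/ffunP => x; rewrite !ffunE f_sched_parallel.
- move=> ->; exists [ffun => Ordinal n_gt0].
    by rewrite inE; apply/'forall_forallP => i j; rewrite ffunE.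
  by apply/ffunP => x; rewrite !ffunE f_sched_parallel.
Qed.

Theorem mainTheorem2 (n : nat) (hn : (1 <= n)%N) :
  mu200 n = (1 / ((3 ^ n)%:R - (2 ^ n.+1)%:R + 2))%R.
Proof. by rewrite /mu200 dynamics200_parallel // cards1. Qed.
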